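(* Let $\mathbb{K}$ be a field and let $\Delta$ be a $d$-dimensional simplicial complex on vertex set $[n]$ whose $d$-dimensional facets are $F_1,\dots,F_s$ (it may have further facets of smaller dimension). Assume $\tilde H_d(\Delta;\mathbb{K})\neq 0$ and let $F=c_1F_1+\dots+c_sF_s$ ($c_i\in\mathbb{K}$) be a nonzero element of $\tilde H_d(\Delta;\mathbb{K})$. Put $$F_\Delta=c_1x_{F_1}V(F_1)+\dots+c_sx_{F_s}V(F_s)=c_1\sum_{\sigma\in S^{F_1}}\operatorname{sign}(\sigma)\,x^{\mu}_{\sigma(F_1)}+\dots+c_s\sum_{\sigma\in S^{F_s}}\operatorname{sign}(\sigma)\,x^{\mu}_{\sigma(F_s)},$$ where $\mu=(d+1,d,\dots,1)$. Then $F_\Delta$ (viewed in $S$ via $x_i\mapsto y_i$) is a $\binom{d+2}{2}$-coinvariant stress of $\Delta$, i.e. $F_\Delta\in\big(I_\Delta+(e_1,\dots,e_{d+1})\big)^{-1}_{-\binom{d+2}{2}}$. In particular $\dim_{\mathbb{K}}\big(I_\Delta+(e_1,\dots,e_{d+1})\big)^{-1}_{-\binom{d+2}{2}}>0$.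
   Context: $R=\mathbb{K}[x_1,\dots,x_n]$ with $\deg x_i=1$; $S=\mathbb{K}[y_1,\dots,y_n]$ with $\deg y_i=-1$, made into an $R$-module by contraction: $x^a\circ y^b=y^{b-a}$ if $b_i\ge a_i$ for all $i$ and $0$ otherwise, extended linearly. For an ideal $I\subset R$, its inverse system is $I^{-1}=\{G\in S: g\circ G=0 \text{ for all } g\in I\}$, and $I^{-1}_{-k}$ is its degree $-k$ part. Polynomials in $R$ are identified with polynomials in $S$ via $x_i\leftrightarrow y_i$. $I_\Delta=(x_\tau:\tau\subseteq[n],\ \tau\notin\Delta)$ is the Stanley–Reisner ideal, where $x_\tau=\prod_{i\in\tau}x_i$. $e_k=\sum_{j_1<\dots<j_k}x_{j_1}\cdots x_{j_k}$ is the $k$-th elementary symmetric polynomial in $x_1,\dots,x_n$. The space of $k$-coinvariant stresses of $\Delta$ is $(I_\Delta+(e_1,\dots,e_{d+1}))^{-1}_{-k}$. For $B=\{i_1<\dots<i_m\}\subseteq[n]$, $V(B)=\prod_{j<k}(x_{i_j}-x_{i_k})$ is the Vandermonde determinant. Simplicial homology is computed with faces oriented by increasing vertex order. $S^{F}$ is the symmetric group on the elements of $F$; for $F=\{i_1<\dots<i_{d+1}\}$ and $\sigma\in S^F$, $x^{\mu}_{\sigma(F)}=\prod_{j=1}^{d+1}x_{\sigma(i_j)}^{\mu_j}$. *)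

From HB Require Import structures.
From mathcomp Require Import all_boot all_order all_algebra.
From mathcomp Require Import mpoly.
Set Implicit Arguments. Unset Strict Implicit. Unset Printing Implicit Defensive.
Import GRing.Theory.
Local Open Scope ring_scope.

Section Defs.
Variables (K : fieldType) (n : nat).

Definition simplicial_complex (D : {set {set 'I_n}}) : Prop :=
  [/\ set0 \in D,
      (forall G H : {set 'I_n}, G \in D -> H \subset G -> H \in D) &
      (forall i : 'I_n, [set i] \in D)].

Definition has_dim (D : {set {set 'I_n}}) (d : nat) : Prop :=
  (exists2 G, G \in D & #|G| = d.+1) /\ (forall G, G \in D -> #|G| <= d.+1)%N.

Definition is_chain (D : {set {set 'I_n}}) (k : nat) (c : {set 'I_n} -> K) : Prop :=
  forall G, c G != 0 -> G \in D /\ #|G| = k.+1.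

(* Simplicial boundary with faces oriented by increasing vertex order,
   evaluated at a set tau (of size k, i.e. a (k-1)-face):
   d(c)(tau) = sum over v notin tau with tau+v in D of
               (-1)^(position of v in tau+v) c(tau+v).
   For k = 0 (tau = empty set) this is the augmentation, giving reduced
   homology. *)
Definition boundary (D : {set {set 'I_n}}) (c : {set 'I_n} -> K)
    (tau : {set 'I_n}) : K :=
  \sum_(v : 'I_n | (v \notin tau) && ((v |: tau) \in D))
     (-1) ^+ #|[set u in tau | (u < v)%N]| * c (v |: tau).

Definition is_cycle (D : {set {set 'I_n}}) (k : nat) (c : {set 'I_n} -> K) : Prop :=
  is_chain D k c /\
  (forall tau, tau \in D -> #|tau| = k -> boundary D c tau = 0).

Definition is_boundary (D : {set {set 'I_n}}) (k : nat) (c : {set 'I_n} -> K) : Prop :=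
  exists2 b, is_chain D k.+1 b &
    forall G, G \in D -> #|G| = k.+1 -> c G = boundary D b G.

Definition nonzero_homology_class (D : {set {set 'I_n}}) (k : nat)
    (c : {set 'I_n} -> K) : Prop :=
  is_cycle D k c /\ ~ is_boundary D k c.

Definition xset (tau : {set 'I_n}) : {mpoly K[n]} := \prod_(i in tau) 'X_i.

Definition vandermonde (B : {set 'I_n}) : {mpoly K[n]} :=
  \prod_(i in B) \prod_(j in B | (i < j)%N) ('X_i - 'X_j).

Definition F_Delta (D : {set {set 'I_n}}) (d : nat) (c : {set 'I_n} -> K)
    : {mpoly K[n]} :=
  \sum_(G in D | #|G| == d.+1) c G *: (xset G * vandermonde G).

(* Contraction action of R on S; elements of S are represented by
   polynomials in {mpoly K[n]} via y_i <-> x_i.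
   x^a o y^b = y^(b-a) if a <= b componentwise, 0 otherwise. *)
Definition contract_mon (a : 'X_{1..n}) (G : {mpoly K[n]}) : {mpoly K[n]} :=
  \sum_(b <- msupp G) (if lem a b then G@_b *: 'X_[mnm_sub b a] else 0).

Definition contract (g G : {mpoly K[n]}) : {mpoly K[n]} :=
  \sum_(a <- msupp g) g@_a *: contract_mon a G.

Definition in_ideal (gens : {mpoly K[n]} -> Prop) (g : {mpoly K[n]}) : Prop :=
  exists s : seq ({mpoly K[n]} * {mpoly K[n]}),
    (forall p, p \in s -> gens p.2) /\ g = \sum_(p <- s) p.1 * p.2.

Definition coinv_gens (D : {set {set 'I_n}}) (d : nat) (g : {mpoly K[n]}) : Prop :=
  (exists2 tau : {set 'I_n}, tau \notin D & g = xset tau) \/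
  (exists2 k : nat, (1 <= k <= d.+1)%N & g = mesym n K k).

(* G lies in the degree -k part of S (in x-variables: homogeneous of degree k;
   the zero polynomial is included) *)
Definition homog_deg (k : nat) (G : {mpoly K[n]}) : Prop :=
  forall m, m \in msupp G -> mdeg m = k.

Definition coinvariant_stress (D : {set {set 'I_n}}) (d k : nat)
    (G : {mpoly K[n]}) : Prop :=
  homog_deg k G /\
  (forall g, in_ideal (coinv_gens D d) g -> contract g G = 0).

End Defs.

(* Expanding the determinant of a Vandermonde matrix with a repeated row of
   ones gives sum_k (-1)^k V(S - s_k) = 0 for any points s_1 < ... < s_m.
   Applied to the points x_G together with two extra points w, 0 placed last,
   it says that G |-> V(G) (prod_{u in G} (x_u - w) - x_G) is, up to the sign
   (-1)^|G|, the coboundary of a cochain.  Pairing with the cycle c kills it,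
   so sum_G c_G V(G) prod_{u in G} (x_u + X) does not depend on X; its
   X^k-coefficient is e_k o F_Delta, which therefore vanishes for k >= 1.
   A non-face tau is contained in no face G with c_G <> 0, so x_tau o F_Delta
   = 0, and homogeneity of degree (d+1) + C(d+1,2) is immediate.  Finally
   x_G o F_Delta = c_G V(G) <> 0 for a face G in the support of c, because
   distinct d-faces are incomparable. *)

From HB Require Import structures.
From mathcomp Require Import all_boot all_order all_algebra ring.
From mathcomp Require Import mpoly.
From mathcomp.multinomials Require Import ssrcomplements.
Set Implicit Arguments. Unset Strict Implicit. Unset Printing Implicit Defensive.
Import GRing.Theory.
Local Open Scope ring_scope.

Local Notation rank A v := #|[set u in A | (u < v)%N]|.

Section Contraction.
Variables (K : fieldType) (n : nat).
Implicit Types (g p q G P Q : {mpoly K[n]}) (a b m : 'X_{1..n}).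

Lemma mcoeff_contract_mon a G m : (contract_mon a G)@_m = G@_(m + a).
Proof.
rewrite /contract_mon raddf_sum /=.
have coefE b : (if lem a b then G@_b *: 'X_[(b - a)%MM] else 0)@_m
               = G@_b * (b == (m + a)%MM)%:R.
  case: ifP => [le_ab|nle_ab].
    rewrite mcoeffZ mcoeffX; suff -> : ((b - a)%MM == m) = (b == (m + a)%MM) by [].
    apply/idP/idP => /eqP eq_b; apply/eqP; first by rewrite -eq_b submK.
    by rewrite eq_b addmK.
  rewrite raddf0; case: eqP => [eq_b|]; last by rewrite mulr0.
  by move: nle_ab; rewrite eq_b lem_addl.
rewrite (eq_bigr _ (fun b _ => coefE b)).
have [ma_in|ma_out] := boolP ((m + a)%MM \in msupp G).
  rewrite (bigD1_seq (m + a)%MM) ?msupp_uniq //= eqxx mulr1 big1 ?addr0 //.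
  by move=> b /negbTE ->; rewrite mulr0.
rewrite memN_msupp_eq0 // big_seq big1 // => b b_in.
by case: eqP => [eq_b|]; [move: ma_out; rewrite -eq_b b_in | rewrite mulr0].
Qed.

Definition mpairing (f : 'X_{1..n} -> K) p := \sum_(a <- msupp p) p@_a * f a.

Lemma mpairing_ord f p k : (msize p <= k)%N ->
  mpairing f p = \sum_(a : 'X_{1..n < k}) p@_a * f a.
Proof.
move=> le_pk; rewrite /mpairing (big_mksub 'X_{1..n < k}) ?msupp_uniq //=.
  by rewrite big_rmcond //= => a /memN_msupp_eq0 ->; rewrite mul0r.
by move=> a /msize_mdeg_lt /leq_trans; apply.
Qed.

Lemma mpairingD f p q : mpairing f (p + q) = mpairing f p + mpairing f q.
Proof.
set k := maxn (msize p) (msize q).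
have le_pk : (msize p <= k)%N by rewrite leq_maxl.
have le_qk : (msize q <= k)%N by rewrite leq_maxr.
have le_pqk : (msize (p + q) <= k)%N by apply: leq_trans (msizeD_le _ _) _.
rewrite !(mpairing_ord f le_pk, mpairing_ord f le_qk, mpairing_ord f le_pqk).
by rewrite -big_split; apply: eq_bigr => a _; rewrite mcoeffD mulrDl.
Qed.

Lemma mpairing0 f : mpairing f 0 = 0.
Proof. by rewrite /mpairing msupp0 big_nil. Qed.

Lemma mpairingZX f c m : mpairing f (c *: 'X_[m]) = c * f m.
Proof.
have [->|nz_c] := eqVneq c 0; first by rewrite scale0r mpairing0 mul0r.
rewrite /mpairing (perm_big _ (msuppZ _ nz_c)) msuppX big_seq1.
by rewrite mcoeffZ mcoeffX eqxx mulr1.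
Qed.

Lemma mpairingM f p q : mpairing f (p * q) =
  \sum_(a <- msupp p) p@_a * \sum_(b <- msupp q) q@_b * f (a + b)%MM.
Proof.
rewrite mpolyME (big_morph _ (mpairingD f) (mpairing0 f)) big_allpairs_dep /=.
apply: eq_bigr => a _; rewrite mulr_sumr; apply: eq_bigr => b _.
by rewrite mpairingZX mulrA.
Qed.

Lemma mcoeff_contract g G m :
  (contract g G)@_m = mpairing (fun a => G@_(m + a)) g.
Proof.
rewrite /contract /mpairing raddf_sum; apply: eq_bigr => a _.
by rewrite /= mcoeffZ mcoeff_contract_mon.
Qed.

Lemma contractDl g h G : contract (g + h) G = contract g G + contract h G.
Proof. by apply/mpolyP => m; rewrite mcoeffD !mcoeff_contract mpairingD. Qed.

Lemma contract0l G : contract 0 G = 0.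
Proof. by rewrite /contract msupp0 big_nil. Qed.

Lemma contract_suml I (r : seq I) (P : pred I) (F : I -> {mpoly K[n]}) G :
  contract (\sum_(i <- r | P i) F i) G = \sum_(i <- r | P i) contract (F i) G.
Proof. exact: (big_morph (fun g => contract g G) (fun g h => contractDl g h G) (contract0l G)). Qed.

Lemma contractDr g P Q : contract g (P + Q) = contract g P + contract g Q.
Proof.
apply/mpolyP => m; rewrite mcoeffD !mcoeff_contract -big_split /=.
by apply: eq_bigr => a _; rewrite mcoeffD mulrDr.
Qed.

Lemma contractZr g c P : contract g (c *: P) = c *: contract g P.
Proof.
apply/mpolyP => m; rewrite mcoeffZ !mcoeff_contract /mpairing mulr_sumr.
by apply: eq_bigr => a _; rewrite mcoeffZ mulrCA.
Qed.

Lemma contractr0 g : contract g 0 = 0.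
Proof. by have := contractZr g 0 0; rewrite !scale0r. Qed.

Lemma contract_sumr g I (r : seq I) (P : pred I) (F : I -> {mpoly K[n]}) :
  contract g (\sum_(i <- r | P i) F i) = \sum_(i <- r | P i) contract g (F i).
Proof. exact: (big_morph (contract g) (contractDr g) (contractr0 g)). Qed.

Lemma contractM p q G : contract (p * q) G = contract p (contract q G).
Proof.
apply/mpolyP => m; rewrite mcoeff_contract mpairingM mcoeff_contract.
apply: eq_bigr => a _; congr (_ * _); rewrite mcoeff_contract.
by apply: eq_bigr => b _; rewrite addmA.
Qed.

Lemma contractX a G : contract 'X_[a] G = contract_mon a G.
Proof. by rewrite /contract msuppX big_seq1 mcoeffX eqxx scale1r. Qed.

Lemma contract_mon_mulX a Q : contract_mon a ('X_[a] * Q) = Q.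
Proof. by apply/mpolyP => m; rewrite mcoeff_contract_mon mulrC addmC mcoeffMX. Qed.

Definition mfree (i : 'I_n) P := forall b, b \in msupp P -> b i = 0%N.

Lemma contract_mon_mfree a P i : mfree i P -> a i != 0%N -> contract_mon a P = 0.
Proof.
move=> free_P nz_ai; apply/mpolyP => m; rewrite mcoeff_contract_mon raddf0.
apply: memN_msupp_eq0; apply/negP => /free_P /eqP.
by rewrite mnmDE addn_eq0 (negbTE nz_ai) andbF.
Qed.

Lemma mfree1 i : mfree i 1.
Proof. by move=> b; rewrite msupp1 inE => /eqP ->; rewrite mnm0E. Qed.

Lemma mfreeX i j : j != i -> mfree i 'X_j.
Proof. by move=> ne_ji b; rewrite msuppX inE => /eqP ->; rewrite mnm1E (negbTE ne_ji). Qed.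

Lemma mfreeB i P Q : mfree i P -> mfree i Q -> mfree i (P - Q).
Proof. by move=> free_P free_Q b /msuppB_le; rewrite mem_cat => /orP [/free_P|/free_Q]. Qed.

Lemma mfreeM i P Q : mfree i P -> mfree i Q -> mfree i (P * Q).
Proof.
move=> free_P free_Q b /msuppM_le /allpairsP [[b1 b2] /= [b1_in b2_in ->]].
by rewrite mnmDE free_P // free_Q.
Qed.

Lemma mfree_prod i I (r : seq I) (P : pred I) (F : I -> {mpoly K[n]}) :
  (forall j, P j -> mfree i (F j)) -> mfree i (\prod_(j <- r | P j) F j).
Proof. by move=> free_F; elim/big_ind: _ => //; [exact: mfree1 | exact: mfreeM]. Qed.

End Contraction.

Section StrictlyIncreasing.
Variables (N r : nat) (f : 'I_r -> 'I_N).
Hypothesis f_incr : forall i j : 'I_r, (i < j)%N -> (f i < f j)%N.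

Lemma incr_ltn i j : (f i < f j)%N = (i < j)%N.
Proof.
apply/idP/idP; last exact: f_incr.
by apply: contraTT; rewrite -!leqNgt leq_eqVlt => /orP [/eqP/val_inj ->|/f_incr/ltnW].
Qed.

Lemma incr_inj : injective f.
Proof.
move=> i j eq_f; apply: val_inj.
by case: (ltngtP i j) => // /f_incr; rewrite eq_f ltnn.
Qed.

Lemma card_rank_imset (A : {set 'I_r}) v :
  rank (f @: A) (f v) = rank A v.
Proof.
rewrite -(card_imset _ incr_inj); apply: eq_card => u; rewrite inE.
apply/andP/imsetP => [[/imsetP [k kA ->] lt_kv]|[k]].
  by exists k; rewrite // inE kA -incr_ltn.
by rewrite inE => /andP [kA lt_kv] ->; rewrite imset_f // incr_ltn.
Qed.

Lemma imsetD1_incr (A : {set 'I_r}) v : (f @: A) :\ f v = f @: (A :\ v).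
Proof.
apply/setP => u; rewrite in_setD1; apply/andP/imsetP => [[ne_u /imsetP [k kA eq_u]]|[k]].
  by exists k; rewrite // in_setD1 kA andbT; apply: contraNneq ne_u => <-; apply/eqP.
by rewrite in_setD1 => /andP [ne_kv kA] ->; rewrite (inj_eq incr_inj) ne_kv imset_f.
Qed.

End StrictlyIncreasing.

Lemma enum_val_incr N (S : {set 'I_N}) (i j : 'I_#|S|) :
  (i < j)%N -> (enum_val i < enum_val j)%N.
Proof.
have x0 := enum_val i; rewrite !(enum_val_nth x0) => lt_ij.
have sorted_S : sorted (fun x y : 'I_N => (x < y)%N) (enum S).
  rewrite /enum_mem -enumT; apply: sorted_filter; first exact: ltn_trans.
  by have := iota_ltn_sorted 0 N; rewrite -val_enum_ord sorted_map.
by apply: (sorted_ltn_nth _ x0 sorted_S); rewrite // ?inE -?cardE //; exact: ltn_trans.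
Qed.

Lemma card_ltn_ord m (j : 'I_m) : #|[set l : 'I_m | (l < j)%N]| = j.
Proof.
have le_jm : (j <= m)%N by apply: ltnW.
have -> : [set l : 'I_m | (l < j)%N] = widen_ord le_jm @: [set: 'I_j].
  apply/setP => x; rewrite inE; apply/idP/imsetP => [lt_xj|[l _ ->]]; last exact: (ltn_ord l).
  by exists (Ordinal lt_xj); rewrite //; apply: val_inj.
have widen_inj : injective (widen_ord le_jm).
  by move=> x y eq_xy; apply: val_inj; exact: (congr1 val eq_xy).
by rewrite (card_imset _ widen_inj) cardsT card_ord.
Qed.

Lemma card_pairs_ltn N (G : {set 'I_N}) :
  (\sum_(i in G) \sum_(j in G | (i < j)%N) 1)%N = 'C(#|G|, 2).
Proof.
rewrite big_enum_val /= -bin2_sum big_mkord.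
under eq_bigr => a _.
  rewrite big_enum_val_cond /= big_mkcond /=.
  under eq_bigr => b _ do rewrite (incr_ltn (@enum_val_incr N G)).
  over.
rewrite exchange_big /=; apply: eq_bigr => b _.
by rewrite -big_mkcond /= sum1dep_card card_ltn_ord.
Qed.

Lemma lift_incr r (j : 'I_r.+1) (i l : 'I_r) : (i < l)%N -> (lift j i < lift j l)%N.
Proof. by rewrite /= !ltnNge leq_bump2. Qed.

Lemma setTD1_lift r (j : 'I_r.+1) : [set: 'I_r.+1] :\ j = lift j @: [set: 'I_r].
Proof.
apply/setP => x; rewrite !inE andbT; apply/idP/imsetP => [ne_xj|[l _ ->]].
  by case: (unliftP j x) ne_xj => [l ->|->]; [exists l | rewrite eqxx].
by rewrite eq_sym neq_lift.
Qed.

Lemma rank_setU1_ge N (B : {set 'I_N}) (x v : 'I_N) : (v <= x)%N ->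
  [set u in x |: B | (u < v)%N] = [set u in B | (u < v)%N].
Proof.
move=> le_vx; apply/setP => u; rewrite !inE.
by case: eqP => [->|] //=; rewrite ltnNge le_vx andbF.
Qed.

Lemma rank_all_lt N (B : {set 'I_N}) (v : 'I_N) :
  (forall u, u \in B -> (u < v)%N) -> [set u in B | (u < v)%N] = B.
Proof. by move=> lt_Bv; apply/setP => u; rewrite inE andb_idr //; apply: lt_Bv. Qed.

Lemma setU1D1 (T : finType) (x y : T) (B : {set T}) :
  x != y -> (x |: B) :\ y = x |: (B :\ y).
Proof.
by move=> ne_xy; apply/setP => u; rewrite !inE; have [->|] := eqVneq u x; rewrite ?ne_xy.
Qed.

Section Vandermonde.
Variable R : comNzRingType.

Definition vdm N (p : 'I_N -> R) (A : {set 'I_N}) : R :=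
  \prod_(i in A) \prod_(j in A | (i < j)%N) (p i - p j).

Lemma vdm_imset N M (p : 'I_N -> R) (q : 'I_M -> R) (f : 'I_M -> 'I_N) (A : {set 'I_M}) :
  (forall i j : 'I_M, (i < j)%N -> (f i < f j)%N) -> (forall i, p (f i) = q i) ->
  vdm p (f @: A) = vdm q A.
Proof.
move=> f_incr pfq; have f_inj : {in A &, injective f} := in2W (incr_inj f_incr).
rewrite /vdm (big_imset _ f_inj); apply: eq_bigr => i _.
rewrite big_mkcondr (big_imset _ f_inj) [RHS]big_mkcondr; apply: eq_bigr => j _.
by rewrite (incr_ltn f_incr) !pfq.
Qed.

Lemma vdm_setU1_max N (p : 'I_N -> R) (A : {set 'I_N}) (t : 'I_N) :
  (forall u, u \in A -> (u < t)%N) ->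
  vdm p (t |: A) = vdm p A * \prod_(u in A) (p u - p t).
Proof.
move=> lt_At; have tA : t \notin A by apply/negP => /lt_At; rewrite ltnn.
rewrite /vdm big_setU1 //= big1 ?mul1r; last first.
  move=> j /andP [+ lt_tj]; rewrite in_setU1 => /orP [/eqP eq_jt|/lt_At].
    by move: lt_tj; rewrite eq_jt ltnn.
  by move/(ltn_trans lt_tj); rewrite ltnn.
rewrite -big_split /=; apply: eq_bigr => i iA.
by rewrite big_mkcondr big_setU1 //= (lt_At _ iA) -big_mkcondr mulrC.
Qed.

Lemma sum_alt_vdm_lift r (q : 'I_r.+2 -> R) :
  \sum_(j < r.+2) (-1) ^+ j * vdm (fun k => q (lift j k)) setT = 0.
Proof.
(* Rows 0 and 1 of [M] are both ones; expanding [\det M = 0] along row 0 gives the identity. *)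
pose M := \matrix_(i < r.+2, j < r.+2) if i == ord0 then 1 else q j ^+ i.-1.
have detM : \det M = 0.
  apply: (@determinant_alternate _ _ _ ord0 (lift ord0 ord0)) => // j.
  by rewrite !mxE.
pose s : R := \prod_(i < r.+1) \prod_(l < r.+1 | (i < l)%N) (-1).
have vdm_flip (q' : 'I_r.+1 -> R) :
  vdm q' setT = s * \prod_(i < r.+1) \prod_(l < r.+1 | (i < l)%N) (q' l - q' i).
  rewrite /vdm /s -big_split; apply: eq_big => [i|i _]; first by rewrite in_setT.
  rewrite -big_split; apply: eq_big => [l|l _]; first by rewrite in_setT.
  by rewrite /= mulN1r opprB.
rewrite (expand_det_row _ ord0) in detM.
transitivity (s * \sum_(j < r.+2) M ord0 j * cofactor M ord0 j).
  rewrite mulr_sumr; apply: eq_bigr => j _.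
  rewrite vdm_flip mulrCA mxE eqxx mul1r /cofactor add0n; congr (_ * (_ * _)).
  rewrite -[X in \det X](_ : Vandermonde r.+1 (\row_k q (lift j k)) = _).
    by rewrite det_Vandermonde; apply: eq_bigr => i _; apply: eq_bigr => l _; rewrite !mxE.
  by apply/matrixP => k l; rewrite !mxE lift0.
by rewrite detM mulr0.
Qed.

Lemma sum_alt_vdm_ord r (q : 'I_r -> R) : (1 < r)%N ->
  \sum_(k < r) (-1) ^+ #|[set u : 'I_r | (u < k)%N]| * vdm q (setT :\ k) = 0.
Proof.
case: r q => [|[|r]] q // _; rewrite -[RHS](sum_alt_vdm_lift q).
apply: eq_bigr => j _; rewrite card_ltn_ord setTD1_lift.
by rewrite (vdm_imset (q := fun k => q (lift j k))) //; apply: lift_incr.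
Qed.

Lemma sum_alt_vdm N (p : 'I_N -> R) (S : {set 'I_N}) : (1 < #|S|)%N ->
  \sum_(k in S) (-1) ^+ rank S k * vdm p (S :\ k) = 0.
Proof.
move=> S_gt1; set e : 'I_#|S| -> 'I_N := enum_val.
have e_incr := @enum_val_incr N S.
have S_e : S = e @: setT.
  apply/setP => x; apply/idP/imsetP => [xS|[l _ ->]]; last exact: enum_valP.
  by exists (enum_rank_in xS x); rewrite // /e enum_rankK_in.
rewrite -[RHS](sum_alt_vdm_ord (fun k => p (e k)) S_gt1) big_enum_val /=.
apply: eq_bigr => j _; congr (_ ^+ _ * _).
  by rewrite {1}S_e card_rank_imset //; apply: eq_card => u; rewrite !inE.
by rewrite {1}S_e imsetD1_incr // (vdm_imset (q := fun k => p (e k))).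
Qed.

Lemma vdm_mul_prod_subrB_top N (p : 'I_N -> R) (A : {set 'I_N}) (t1 t2 : 'I_N) :
  (forall u, u \in A -> (u < t1)%N) -> (t1 < t2)%N ->
  vdm p A * (\prod_(u in A) (p u - p t1) - \prod_(u in A) (p u - p t2)) =
  (-1) ^+ #|A| * \sum_(v in A) (-1) ^+ rank A v *
     (vdm p (A :\ v) * \prod_(u in A :\ v) ((p u - p t1) * (p u - p t2)) * (p t1 - p t2)).
Proof.
move=> lt_At1 lt_t12.
have lt_At2 u : u \in A -> (u < t2)%N by move/lt_At1/ltn_trans; apply.
have lt_t1At2 u : u \in t1 |: A -> (u < t2)%N.
  by rewrite in_setU1 => /orP [/eqP ->|/lt_At2].
have t1A : t1 \notin A by apply/negP => /lt_At1; rewrite ltnn.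
have t2A : t2 \notin t1 |: A by apply/negP => /lt_t1At2; rewrite ltnn.
have ne_t21 : t2 != t1 by rewrite -val_eqE /= gtn_eqF.
have := @sum_alt_vdm N p (t2 |: (t1 |: A)).
rewrite !cardsU1 t1A t2A => /(_ isT).
rewrite big_setU1 // big_setU1 // /=.
rewrite setU1K // setU1D1 // setU1K //.
rewrite rank_setU1_ge // rank_all_lt //.
rewrite rank_setU1_ge ?(ltnW lt_t12) // rank_setU1_ge ?leqnn // rank_all_lt //.
rewrite !vdm_setU1_max // => E.
set S := (X in _ = _ * X).
have sumE : \sum_(v in A) (-1) ^+ rank (t2 |: (t1 |: A)) v *
              vdm p ((t2 |: (t1 |: A)) :\ v) = S.
  apply: eq_bigr => v vA; have lt_vt1 := lt_At1 v vA; have lt_vt2 := lt_At2 v vA.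
  rewrite rank_setU1_ge ?(ltnW lt_vt2) // rank_setU1_ge ?(ltnW lt_vt1) //.
  have ne_t2v : t2 != v by rewrite -val_eqE /= gtn_eqF.
  have ne_t1v : t1 != v by rewrite -val_eqE /= gtn_eqF.
  rewrite setU1D1 // setU1D1 //.
  rewrite vdm_setU1_max; last first.
    by move=> u; rewrite in_setU1 => /orP [/eqP -> | /setD1P [_ /lt_At2]].
  rewrite vdm_setU1_max; last by move=> u /setD1P [_ /lt_At1].
  rewrite big_setU1 ?in_setD1 ?(negbTE t1A) ?andbF //= big_split /=.
  by congr (_ * _); ring.
rewrite sumE cardsU1 t1A exprS mulN1r mulNr in E.
have sign2 : (-1) ^+ #|A| * (-1) ^+ #|A| = 1 :> R by rewrite -exprMn mulrNN mulr1 expr1n.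
have -> : S = (-1) ^+ #|A| *
    (vdm p A * (\prod_(u in A) (p u - p t1) - \prod_(u in A) (p u - p t2))).
  by apply/eqP; rewrite -subr_eq0 -[X in _ == X]E; apply/eqP; ring.
by rewrite mulrA sign2 mul1r.
Qed.

Lemma vdm_mul_prod_subrB N (p : 'I_N -> R) (A : {set 'I_N}) (a b : R) :
  vdm p A * (\prod_(u in A) (p u - a) - \prod_(u in A) (p u - b)) =
  (-1) ^+ #|A| * \sum_(v in A) (-1) ^+ rank A v *
     (vdm p (A :\ v) * \prod_(u in A :\ v) ((p u - a) * (p u - b)) * (a - b)).
Proof.
(* Adjoin two indices above 'I_N carrying the values [a] and [b]. *)
pose q (i : 'I_(N + 2)) :=
  match split i with inl k => p k | inr j => if j == ord0 then a else b end.
pose f : 'I_N -> 'I_(N + 2) := lshift 2.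
pose t1 : 'I_(N + 2) := rshift N ord0.
pose t2 : 'I_(N + 2) := rshift N ord_max.
have f_incr (i j : 'I_N) : (i < j)%N -> (f i < f j)%N by [].
have f_inj (B : {set 'I_N}) : {in B &, injective f} := in2W (incr_inj f_incr).
have qf k : q (f k) = p k by rewrite /q (unsplitK (inl k) : split (f k) = inl k).
have qt1 : q t1 = a.
  by rewrite /q (unsplitK (inr ord0) : split t1 = inr ord0).
have qt2 : q t2 = b.
  by rewrite /q (unsplitK (inr ord_max) : split t2 = inr ord_max).
have lt_fA_t1 u : u \in f @: A -> (u < t1)%N by case/imsetP => k _ ->; rewrite /= addn0.
have lt_t12 : (t1 < t2)%N by rewrite /= addn0 addn1.
have prod_f (B : {set 'I_N}) (g : 'I_(N + 2) -> R) (h : 'I_N -> R) :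
    (forall k, g (f k) = h k) -> \prod_(u in f @: B) g u = \prod_(u in B) h u.
  by move=> gh; rewrite (big_imset _ (f_inj B)); apply: eq_bigr => k _.
have := vdm_mul_prod_subrB_top q lt_fA_t1 lt_t12.
rewrite qt1 qt2 (vdm_imset _ f_incr qf) (card_imset _ (incr_inj f_incr)).
rewrite (prod_f _ _ (fun u => p u - a)) => [|k]; last by rewrite qf.
rewrite (prod_f _ _ (fun u => p u - b)) => [->|k]; last by rewrite qf.
rewrite (big_imset _ (f_inj _)) /=; congr (_ * _); apply: eq_bigr => v _.
rewrite card_rank_imset // imsetD1_incr // (vdm_imset _ f_incr qf).
by rewrite (prod_f _ _ (fun u => (p u - a) * (p u - b))) // => k; rewrite qf.
Qed.

End Vandermonde.

Lemma rmorph_vdm (R S : comNzRingType) (f : {rmorphism R -> S}) N (p : 'I_N -> R) A :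
  f (vdm p A) = vdm (fun i => f (p i)) A.
Proof.
rewrite /vdm rmorph_prod; apply: eq_bigr => i _.
by rewrite rmorph_prod; apply: eq_bigr => j _; rewrite rmorphB.
Qed.

Lemma coef_prod_CaddX (S : comNzRingType) (I : finType) (A : {set I}) (a : I -> S) k :
  (\prod_(u in A) ((a u)%:P + 'X))`_k =
  \sum_(T : {set I} | #|T| == k) (if T \subset A then \prod_(u in A :\: T) a u else 0).
Proof.
rewrite big_mkcond /=.
rewrite (eq_bigr (fun u => (if u \in A then 'X else 0) +
                           (if u \in A then (a u)%:P else 1))); last first.
  by move=> u _; case: ifP => _; rewrite ?add0r // addrC.
rewrite bigA_distr coef_sum [RHS]big_mkcond /=; apply: eq_big => // T _.
have [sub_TA|] := boolP (T \subset A); last first.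
  case/subsetPn => i iT iA; rewrite (bigD1 i) //= iT (negbTE iA) mul0r coef0.
  by case: ifP.
rewrite (bigID (mem T)) /= (eq_bigr (fun _ => 'X)); last first.
  by move=> i iT; rewrite iT (subsetP sub_TA).
rewrite prodr_const (eq_bigr (fun i => (if i \in A then a i else 1)%:P)); last first.
  by move=> i iT; rewrite (negbTE iT); case: ifP.
rewrite -rmorph_prod /= -big_mkcondr /= (eq_bigl (fun i => i \in A :\: T)); last first.
  by move=> i; rewrite in_setD.
by rewrite mulrC coefCM coefXn eq_sym; case: eqP; rewrite ?mulr1 ?mulr0.
Qed.

Lemma sum_pairs_setD1 (S : nmodType) (I : finType) (F : {set I} -> I -> S) :
  \sum_(G : {set I}) \sum_(v in G) F G v = \sum_(T : {set I}) \sum_(v | v \notin T) F (v |: T) v.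
Proof.
rewrite (exchange_big_dep xpredT) //= [RHS](exchange_big_dep xpredT) //=.
apply: eq_bigr => v _; rewrite (reindex_onto (fun T => v |: T) (fun G => G :\ v)) /=.
  apply: eq_bigl => T; rewrite setU11 /=.
  have [vT|vT] := boolP (v \in T); last by rewrite setU1K ?eqxx.
  by apply/negbTE/eqP => eq_T; move: vT; rewrite -eq_T setD11.
by move=> G vG; rewrite setD1K.
Qed.

Section Monomials.
Variables (K : fieldType) (n : nat).

Lemma homog_degP k (P : {mpoly K[n]}) : reflect (homog_deg k P) (P \is k.-homog for mdeg).
Proof. exact: dhomogP. Qed.

Lemma dhomog_big_prod I (r : seq I) (P : pred I) (F : I -> {mpoly K[n]}) (f : I -> nat) :
  (forall i, P i -> F i \is (f i).-homog for mdeg) ->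
  \prod_(i <- r | P i) F i \is (\sum_(i <- r | P i) f i)%N.-homog for mdeg.
Proof.
move=> homF; elim/big_rec2: _ => [|i k p Pi homp]; first exact: dhomog1.
exact: dhomogM (homF i Pi) homp.
Qed.

Lemma xsetE (T : {set 'I_n}) : xset K T = 'X_[mesym1 T].
Proof.
rewrite /xset mprodXE; congr 'X_[_]; apply/mnmP => i.
rewrite mnmE mnm_sumE big_mkcond (bigD1 i) //= mnmE eqxx big1 ?addn0 // => j ne_ji.
by case: (_ \in _); rewrite // mnmE (negbTE ne_ji).
Qed.

Lemma dhomog_xset (T : {set 'I_n}) : xset K T \is #|T|.-homog for mdeg.
Proof. by rewrite xsetE dhomogX /= mdeg_mesym1. Qed.

Lemma dhomog_vandermonde (G : {set 'I_n}) :
  vandermonde K G \is 'C(#|G|, 2).-homog for mdeg.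
Proof.
rewrite -card_pairs_ltn; apply: dhomog_big_prod => i _; apply: dhomog_big_prod => j _.
by rewrite rpredB // dhomogX /= mdeg1.
Qed.

Lemma vandermonde_neq0 (G : {set 'I_n}) : vandermonde K G != 0.
Proof.
rewrite prodf_seq_neq0; apply/allP => i _; apply/implyP => _.
rewrite prodf_seq_neq0; apply/allP => j _; apply/implyP => /andP [_ lt_ij].
apply/eqP => /(congr1 (mcoeff U_(i))); rewrite mcoeffB !mcoeffXU eqxx raddf0.
have -> : (j == i) = false by rewrite -val_eqE gtn_eqF.
by rewrite subr0 => /eqP; rewrite oner_eq0.
Qed.

Lemma mfree_xset_vandermonde i (G : {set 'I_n}) : i \notin G ->
  mfree i (xset K G * vandermonde K G).
Proof.
move=> iG; have ne_i j : j \in G -> j != i by apply: contraTneq => ->.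
apply: mfreeM; first by apply: mfree_prod => j /ne_i; apply: mfreeX.
apply: mfree_prod => j jG; apply: mfree_prod => k /andP [kG _].
by apply: mfreeB; apply: mfreeX; apply: ne_i.
Qed.

Lemma contract_xset (T G : {set 'I_n}) :
  contract (xset K T) (xset K G * vandermonde K G) =
  if T \subset G then xset K (G :\: T) * vandermonde K G else 0.
Proof.
case: ifP => [sub_TG|/negbT/subsetPn [i iT iG]].
  rewrite {2}/xset (big_setID T) /= (setIidPr sub_TG) -/(xset K T) -/(xset K _).
  by rewrite -mulrA xsetE contractX contract_mon_mulX.
rewrite xsetE contractX (contract_mon_mfree (mfree_xset_vandermonde iG)) //.
by rewrite mnmE iT.
Qed.

End Monomials.

Section CycleStress.
Variables (K : fieldType) (n d : nat) (D : {set {set 'I_n}}) (c : {set 'I_n} -> K).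
Hypotheses (D_sc : simplicial_complex D) (c_cycle : is_cycle D d c).

Local Notation F := (F_Delta D d c).
Local Notation R := {poly {mpoly K[n]}}.
Lemma cycle_supp G : c G != 0 -> G \in D /\ #|G| = d.+1.
Proof. by case: c_cycle => c_chain _; apply: c_chain. Qed.

Lemma F_DeltaE : F = \sum_(G : {set 'I_n}) c G *: (xset K G * vandermonde K G).
Proof.
rewrite /F_Delta big_mkcond /=; apply: eq_bigr => G _; case: ifP => // G_face.
have [->|/cycle_supp [GD cardG]] := eqVneq (c G) 0; first by rewrite scale0r.
by rewrite GD cardG eqxx in G_face.
Qed.

Lemma sum_cycle_coface (T : {set 'I_n}) :
  \sum_(v | v \notin T) (-1) ^+ rank T v * c (v |: T) = 0.
Proof.
have [/andP [TD /eqP cardT]|not_ridge] := boolP ((T \in D) && (#|T| == d)).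
  case: c_cycle => _ /(_ T TD cardT) bd_T; rewrite -[RHS]bd_T /boundary.
  rewrite [LHS](bigID (fun v => (v |: T) \in D)) /=.
  rewrite [X in _ + X]big1 ?addr0 // => v /andP [_ vTD].
  have [->|/cycle_supp [vT_D _]] := eqVneq (c (v |: T)) 0; first by rewrite mulr0.
  by rewrite vT_D in vTD.
apply: big1 => v vT; have [->|/cycle_supp [vTD cardvT]] := eqVneq (c (v |: T)) 0.
  by rewrite mulr0.
case: D_sc => _ D_closed _; move: not_ridge; rewrite (D_closed _ _ vTD (subsetUr _ _)) /=.
by move: cardvT; rewrite cardsU1 vT add1n => -[->]; rewrite eqxx.
Qed.

Lemma sum_cycle_alt (S : comNzRingType) (f : {rmorphism K -> S}) (H : {set 'I_n} -> S) :
  \sum_(G : {set 'I_n}) f (c G) * \sum_(v in G) (-1) ^+ rank G v * H (G :\ v) = 0.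
Proof.
(* This is <c, delta H> = <boundary c, H> = 0. *)
under eq_bigr do rewrite mulr_sumr.
rewrite sum_pairs_setD1 big1 // => T _.
transitivity (H T * f (\sum_(v | v \notin T) (-1) ^+ rank T v * c (v |: T))); last first.
  by rewrite sum_cycle_coface rmorph0 mulr0.
rewrite rmorph_sum mulr_sumr; apply: eq_bigr => v vT.
by rewrite rank_setU1_ge // setU1K // rmorphM rmorph_sign; ring.
Qed.

Let phi : {rmorphism K -> R} := (polyC \o @mpolyC n K)%FUN.

Lemma sum_cycle_vandermonde_prod (w : R) :
  \sum_(G : {set 'I_n}) phi (c G) *
    ((vandermonde K G)%:P * (\prod_(u in G) (('X_u)%:P - w) - (xset K G)%:P)) = 0.
Proof.
pose p (i : 'I_n) : R := ('X_i)%:P.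
rewrite -[RHS](sum_cycle_alt phi (fun T => (-1) ^+ d.+1 *
  (vdm p T * \prod_(u in T) ((p u - w) * (p u - 0)) * (w - 0)))).
apply: eq_bigr => G _.
have [->|/cycle_supp [_ cardG]] := eqVneq (c G) 0; first by rewrite rmorph0 !mul0r.
have -> : (xset K G)%:P = \prod_(u in G) (p u - 0).
  by rewrite rmorph_prod; apply: eq_bigr => u _; rewrite subr0.
have -> : (vandermonde K G)%:P = vdm p G := rmorph_vdm (@polyC _) (fun i => 'X_i) G.
rewrite vdm_mul_prod_subrB cardG mulr_sumr.
by congr (_ * _); apply: eq_bigr => v _; ring.
Qed.

Lemma contract_xset_F (T : {set 'I_n}) : contract (xset K T) F =
  \sum_(G : {set 'I_n}) c G *:
     (if T \subset G then xset K (G :\: T) * vandermonde K G else 0).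
Proof.
rewrite F_DeltaE contract_sumr; apply: eq_bigr => G _.
by rewrite contractZr contract_xset.
Qed.

Lemma contract_xset_nonface_F (T : {set 'I_n}) : T \notin D -> contract (xset K T) F = 0.
Proof.
move=> TD; rewrite contract_xset_F big1 // => G _.
have [->|/cycle_supp [GD _]] := eqVneq (c G) 0; first by rewrite scale0r.
case: ifP => sub_TG; last by rewrite scaler0.
by case: D_sc => _ D_closed _; rewrite (D_closed _ _ GD sub_TG) in TD.
Qed.

Lemma contract_mesym_F k : (0 < k)%N -> contract (mesym n K k) F = 0.
Proof.
(* e_k o F is the X^k-coefficient of sum_G c_G V(G) prod_(u in G) (x_u + X). *)
move=> k_gt0; have := congr1 (fun P : R => P`_k) (sum_cycle_vandermonde_prod (- 'X)).
rewrite /= coef_sum coef0 => <-.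
rewrite /mesym contract_suml; under eq_bigr do rewrite contract_xset_F.
rewrite exchange_big /=; apply: eq_bigr => G _.
rewrite !mulrBr coefB !mulrA -!rmorphM coefC -(prednK k_gt0) subr0 coefCM.
rewrite (eq_bigr (fun u => ('X_u)%:P + 'X)) => [|u _]; last by rewrite opprK.
rewrite coef_prod_CaddX mulr_sumr; apply: eq_bigr => T _.
by rewrite mul_mpolyC; case: ifP => _; rewrite ?mulr0 ?scaler0 // mulrC -scalerAl.
Qed.

Lemma contract_ideal_F g : in_ideal (coinv_gens D d) g -> contract g F = 0.
Proof.
case=> s [gens ->]; rewrite contract_suml big_seq big1 // => q q_s.
rewrite contractM; case: (gens q q_s) => [[T TD ->]|[k /andP [k_gt0 _] ->]].
  by rewrite contract_xset_nonface_F // contractr0.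
by rewrite contract_mesym_F // contractr0.
Qed.

Lemma homog_deg_F : homog_deg 'C(d.+2, 2) F.
Proof.
apply/homog_degP; rewrite F_DeltaE rpred_sum // => G _.
have [->|/cycle_supp [_ cardG]] := eqVneq (c G) 0; first by rewrite scale0r rpred0.
rewrite rpredZ // (_ : 'C(d.+2, 2) = #|G| + 'C(#|G|, 2))%N; last by rewrite cardG binS bin1 addnC.
by rewrite dhomogM ?dhomog_xset ?dhomog_vandermonde.
Qed.

Lemma F_Delta_neq0 G0 : c G0 != 0 -> F != 0.
Proof.
move=> c_G0; apply/eqP => F0; have [_ cardG0] := cycle_supp c_G0.
have := contract_xset_F G0; rewrite F0 contractr0 (bigD1 G0) //= subxx setDv.
rewrite /xset big_set0 mul1r big1 ?addr0 => [/esym/eqP|G ne_G].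
  by rewrite scaler_eq0 (negbTE c_G0) (negbTE (vandermonde_neq0 K G0)).
have [->|/cycle_supp [_ cardG]] := eqVneq (c G) 0; first by rewrite scale0r.
case: ifP => [sub_G0G|]; last by rewrite scaler0.
have /eqP eq_G0G : G0 == G by rewrite eqEcard sub_G0G cardG cardG0 /=.
by rewrite eq_G0G eqxx in ne_G.
Qed.

End CycleStress.

Lemma nonzero_class_supp (K : fieldType) n (D : {set {set 'I_n}}) d (c : {set 'I_n} -> K) :
  nonzero_homology_class D d c -> exists G, c G != 0.
Proof.
case=> _ not_bd; have [/existsP //|/existsPn c0] := boolP [exists G, c G != 0].
case: not_bd.
exists (fun=> 0) => [G|G _ _]; first by rewrite eqxx.
by rewrite /boundary big1 => [|v _]; [apply/eqP; rewrite -[_ == 0]negbK c0 | rewrite mulr0].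
Qed.

Theorem theorem4p2 (K : fieldType) (n d : nat) (D : {set {set 'I_n}})
    (c : {set 'I_n} -> K) :
  simplicial_complex D -> has_dim D d ->
  nonzero_homology_class D d c ->
  coinvariant_stress D d 'C(d.+2, 2) (F_Delta D d c) /\
  (exists2 G : {mpoly K[n]}, coinvariant_stress D d 'C(d.+2, 2) G & G != 0).
Proof.
move=> D_sc _ c_class; have [c_cycle _] := c_class.
have F_stress : coinvariant_stress D d 'C(d.+2, 2) (F_Delta D d c).
  by split; [exact: homog_deg_F | move=> g; apply: contract_ideal_F].
split=> //; exists (F_Delta D d c) => //.
have [G0 c_G0] := nonzero_class_supp c_class.
exact (F_Delta_neq0 c_cycle c_G0).
Qed.
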